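(* The function $\phi:(0,\infty)\to\mathbb{R}$, $\phi(x)=\frac{1}{\tanh^2(x)}-\frac{1}{x\tanh(x)}$, is increasing on $(0,\infty)$. *)

From Stdlib Require Export Reals.
Open Scope R_scope.

Definition phi (x : R) : R := 1 / (tanh x ^ 2) - 1 / (x * tanh x).

(** Writing [E = exp x], one has [phi'(x) = N(x) / (x^2 (E - 1/E)^3)] with
    [N(x) = 2 (cosh 3x - cosh x + 4x sinh x - 8x^2 cosh x)].  The function [N]
    and its first five derivatives vanish at [0] (its Taylor coefficients are
    [(9^n - 1 + 8n - 16n(2n-1)) / (2n)!], zero up to [n = 2]), while [N^(6)] is
    positive on [(0, oo)]: bounding [x] by [E - 1] turns [E^3 N^(6)(x)] into a
    polynomial in [E - 1] with positive coefficients.  Integrating six times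
    from [0] gives [N > 0], hence [phi' > 0]. *)

From Stdlib Require Import Reals Lra Lia Psatz.
From Coquelicot Require Import Coquelicot.
Open Scope R_scope.

Lemma lt_of_derive_pos (f f' : R -> R) (a b : R) :
  a < b ->
  (forall z, a <= z <= b -> is_derive f z (f' z)) ->
  (forall z, a < z < b -> 0 < f' z) ->
  f a < f b.
Proof.
  intros Hab Hder Hpos.
  destruct (MVT_cor2 f f' a b Hab) as [c [Hmvt Hc]].
  { intros z Hz. apply is_derive_Reals, Hder, Hz. }
  assert (0 < f' c) by (apply Hpos; exact Hc).
  nra.
Qed.

Lemma pos_of_iterated_derive (F : nat -> R -> R) (a : R) (n : nat) :
  (forall k x, is_derive (F k) x (F (S k) x)) ->
  (forall k, (k < n)%nat -> F k a = 0) ->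
  (forall x, a < x -> 0 < F n x) ->
  forall x, a < x -> 0 < F O x.
Proof.
  revert F. induction n as [|n IH]; intros F Hder Hzero Hpos x Hx.
  - exact (Hpos x Hx).
  - rewrite <- (Hzero O ltac:(lia)).
    apply (lt_of_derive_pos (F O) (F 1%nat)); [exact Hx | intros z _; apply Hder |].
    intros z [Hz _].
    apply (IH (fun k => F (S k))); auto with arith.
Qed.

Lemma exp_mult3 (x : R) : exp (3 * x) = exp x ^ 3.
Proof. replace (3 * x) with (x + x + x) by ring. rewrite !exp_plus. ring. Qed.

Lemma exp_gt1 (x : R) : 0 < x -> 1 < exp x.
Proof. intros Hx. generalize (exp_ineq1_le x). lra. Qed.

(* [num_deriv k] is the [k]-th derivative of the numerator of [phi']; the sign
   [(-1)^k] alternates between even (cosh-like) and odd (sinh-like) parts. *)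
Definition num_deriv (k : nat) (x : R) : R :=
  3 ^ k * (exp (3 * x) + (-1) ^ k * exp (- (3 * x)))
  + (4 * INR k - 1 - 8 * INR k * (INR k - 1)) * (exp x + (-1) ^ k * exp (- x))
  + (4 - 16 * INR k) * x * (exp x - (-1) ^ k * exp (- x))
  - 8 * x ^ 2 * (exp x + (-1) ^ k * exp (- x)).

Lemma num_deriv_derive (k : nat) (x : R) :
  is_derive (num_deriv k) x (num_deriv (S k) x).
Proof.
  unfold num_deriv. auto_derive; [easy |].
  rewrite S_INR. simpl pow. ring.
Qed.

Lemma num_deriv_at0 (k : nat) : (k < 6)%nat -> num_deriv k 0 = 0.
Proof.
  intros Hk. unfold num_deriv.
  rewrite Rmult_0_r, Ropp_0, exp_0.
  do 6 (destruct k as [|k]; [simpl; lra |]).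
  lia.
Qed.

Lemma num_deriv6_poly_pos (x E : R) :
  0 < x -> 1 + x <= E ->
  0 < 729 * (E ^ 6 + 1) - 217 * (E ^ 4 + E ^ 2)
      - 92 * x * (E ^ 2 - 1) * E ^ 2 - 8 * x ^ 2 * (E ^ 2 + 1) * E ^ 2.
Proof.
  intros Hx HE.
  set (t := E - 1).
  assert (Ht : x <= t) by (unfold t; lra).
  replace E with (1 + t) by (unfold t; ring).
  assert (Hpoly : 0 < 721 * t ^ 6 + 4250 * t ^ 5 + 10294 * t ^ 4 + 13204 * t ^ 3
                      + 9216 * t ^ 2 + 3072 * t + 1024)
    by (assert (0 < t) by lra; nra).
  assert (Hdrop : 92 * x * ((1 + t) ^ 2 - 1) * (1 + t) ^ 2
                  + 8 * x ^ 2 * ((1 + t) ^ 2 + 1) * (1 + t) ^ 2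
                  <= 92 * t * ((1 + t) ^ 2 - 1) * (1 + t) ^ 2
                     + 8 * t ^ 2 * ((1 + t) ^ 2 + 1) * (1 + t) ^ 2).
  { assert (0 < (1 + t) ^ 2 - 1) by nra.
    assert (0 < (1 + t) ^ 2) by nra.
    assert (x ^ 2 <= t ^ 2) by nra.
    apply Rplus_le_compat; repeat apply Rmult_le_compat_r; lra. }
  assert (Hid : 729 * ((1 + t) ^ 6 + 1) - 217 * ((1 + t) ^ 4 + (1 + t) ^ 2)
                - 92 * t * ((1 + t) ^ 2 - 1) * (1 + t) ^ 2
                - 8 * t ^ 2 * ((1 + t) ^ 2 + 1) * (1 + t) ^ 2
                = 721 * t ^ 6 + 4250 * t ^ 5 + 10294 * t ^ 4 + 13204 * t ^ 3
                  + 9216 * t ^ 2 + 3072 * t + 1024) by ring.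
  lra.
Qed.

Lemma num_deriv6_pos (x : R) : 0 < x -> 0 < num_deriv 6 x.
Proof.
  intros Hx.
  assert (HE : 1 < exp x) by (apply exp_gt1, Hx).
  assert (Hid : num_deriv 6 x
    = (729 * (exp x ^ 6 + 1) - 217 * (exp x ^ 4 + exp x ^ 2)
       - 92 * x * (exp x ^ 2 - 1) * exp x ^ 2
       - 8 * x ^ 2 * (exp x ^ 2 + 1) * exp x ^ 2) / exp x ^ 3).
  { unfold num_deriv. rewrite !exp_Ropp, exp_mult3.
    simpl INR. field. lra. }
  rewrite Hid.
  apply Rdiv_lt_0_compat; [| apply pow_lt; lra].
  apply num_deriv6_poly_pos; [exact Hx | apply exp_ineq1_le].
Qed.

Lemma num_deriv0_pos (x : R) : 0 < x -> 0 < num_deriv 0 x.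
Proof.
  apply (pos_of_iterated_derive num_deriv 0 6).
  - exact num_deriv_derive.
  - exact num_deriv_at0.
  - exact num_deriv6_pos.
Qed.

Lemma exp_sub_exp_opp_pos (x : R) : 0 < x -> 0 < exp x - exp (- x).
Proof. intros Hx. generalize (exp_increasing (- x) x ltac:(lra)). lra. Qed.

Definition phi_deriv (x : R) : R :=
  num_deriv 0 x / (x ^ 2 * (exp x - exp (- x)) ^ 3).

Lemma phi_derive (x : R) : 0 < x -> is_derive phi x (phi_deriv x).
Proof.
  intros Hx.
  assert (Hsinh := exp_sub_exp_opp_pos x Hx).
  assert (Hcosh : 0 < exp x + exp (- x)) by (generalize (exp_pos (- x)); lra).
  assert (HE : 1 < exp x) by (apply exp_gt1, Hx).
  unfold phi, tanh, sinh, cosh, phi_deriv.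
  auto_derive.
  - repeat split; apply Rgt_not_eq;
      repeat (apply Rmult_lt_0_compat || apply Rinv_0_lt_compat); lra.
  - unfold num_deriv. rewrite !exp_Ropp, exp_mult3.
    simpl INR. field.
    repeat split; nra.
Qed.

Lemma phi_deriv_pos (x : R) : 0 < x -> 0 < phi_deriv x.
Proof.
  intros Hx. unfold phi_deriv.
  apply Rdiv_lt_0_compat; [apply num_deriv0_pos, Hx |].
  assert (Hsinh := exp_sub_exp_opp_pos x Hx).
  apply Rmult_lt_0_compat; apply pow_lt; lra.
Qed.

Theorem lemma6p3 : forall x y : R, 0 < x -> x < y -> phi x < phi y.
Proof.
  intros x y Hx Hxy.
  apply (lt_of_derive_pos phi phi_deriv); [exact Hxy | |].
  - intros z Hz. apply phi_derive. lra.
  - intros z Hz. apply phi_deriv_pos. lra.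
Qed.
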